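(* If $k \geq 9$ and $|q - q_k| < q_k^{-2k-6}$, then $d_{\mathrm{H}}\big(g_{q,k}(\pi_q(A_q)),\ g_{q_k,k}(\pi_{q_k}(A_{q_k}))\big) < q_k^{-2k-4}$.
   Context: $q_k$ is the unique root in $(1,2)$ of $x^k - x^{k-1} - \cdots - x - 1 = 0$. $\pi_q((\epsilon_j)_{j\ge1}) = \sum_{j\ge1}\epsilon_j q^{-j}$ (for sequences over $\{-1,0,1\}$). $g_{q,k}(x) = q^{-k}x + \sum_{j=1}^{k-1}q^{-j}$. $d_{\mathrm{H}}$ is the Hausdorff distance. $W_2 = \{(-1\,0),(0\,{-1}),(00),(01),(10)\}$ and $1^k0^{k+4}W_2^\mathbb{N}$ is the set of sequences over $\{-1,0,1\}$ starting with $k$ ones then $k+4$ zeros whose tail is an infinite concatenation of words from $W_2$. Construction of $A_p$ from a fixed expansion of 1: given $(c_j) \in \{-1,0,1\}^\mathbb{N}$ with $\pi_p((c_j)) = 1$, let $J = \{j : c_j = 0\}$ enumerated $j_0<j_1<\cdots$, $J_{\mathrm{fixed},1} = \{j_n : n=4m+1, m\ge0\}$, $J_{\mathrm{fixed},0} = \{j_n : n = 4m+3, m\ge0\}$; $A_p$ is the set of $(a_j) \in \{0,1\}^\mathbb{N}$ with $a_j = 1$ if $c_j = 1$, $a_j = 0$ if $c_j = -1$, $a_j = 1$ if $j\in J_{\mathrm{fixed},1}$, $a_j = 0$ if $j \in J_{\mathrm{fixed},0}$. Here $A_{q_k}$ is built from $(c_j) = 1^k0^\infty$, and $A_q$ is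 built from an arbitrarily chosen sequence $(c_j) \in 1^k0^{k+4}W_2^\mathbb{N}$ with $\pi_q((c_j)) = 1$ (such a sequence exists for these $k,q$). *)

From HB Require Import structures.
From mathcomp Require Import all_boot all_order all_algebra.
From mathcomp Require Import all_classical all_reals all_analysis.
Set Implicit Arguments. Unset Strict Implicit. Unset Printing Implicit Defensive.
Import Order.TTheory GRing.Theory Num.Theory.
Local Open Scope classical_set_scope.
Local Open Scope ring_scope.

(* Sequences (eps_j)_{j>=1} are functions nat -> _; index 0 is ignored. *)

Definition piR {R : realType} (q : R) (u : nat -> R) : R :=
  limn (fun n => \sum_(1 <= j < n) (u j * q ^- j)).

(* digit sequences over {-1,0,1} are represented as int-valued sequences *)
Definition piZ {R : realType} (q : R) (c : nat -> int) : R :=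
  piR q (fun j => (c j)%:~R).

Definition piB {R : realType} (q : R) (a : nat -> bool) : R :=
  piR q (fun j => (a j : nat)%:R).

Definition g {R : realType} (q : R) (k : nat) (x : R) : R :=
  q ^- k * x + \sum_(1 <= j < k) q ^- j.

Definition distset {R : realType} (x : R) (B : set R) : R :=
  inf [set `|x - b| | b in B].
Definition dH {R : realType} (A B : set R) : R :=
  Num.max (sup [set distset a B | a in A]) (sup [set distset b A | b in B]).

(* number of zeros of c among indices 1 <= i < j; if c_j = 0, j = j_n with
   n = zcount c j in the increasing enumeration j_0 < j_1 < ... of J *)
Definition zcount (c : nat -> int) (j : nat) : nat :=
  \sum_(1 <= i < j) (c i == 0).

(* A_p built from the expansion c (the set depends only on c) *)
Definition Aset (c : nat -> int) : set (nat -> bool) :=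
  [set a | forall j, (1 <= j)%N ->
     [/\ (c j = 1 -> a j = true),
         (c j = -1 -> a j = false),
         (c j = 0 -> (zcount c j %% 4 = 1)%N -> a j = true)
       & (c j = 0 -> (zcount c j %% 4 = 3)%N -> a j = false)]].

Definition ck (k : nat) (j : nat) : int := if (1 <= j <= k)%N then 1 else 0.

Definition inW2 (x y : int) : Prop :=
  (x, y) = (-1, 0) \/ (x, y) = (0, -1) \/ (x, y) = (0, 0) \/
  (x, y) = (0, 1) \/ (x, y) = (1, 0).

Definition in_1k0W2 (k : nat) (c : nat -> int) : Prop :=
  (forall j, (1 <= j <= k)%N -> c j = 1) /\
  (forall j, (k < j <= 2 * k + 4)%N -> c j = 0) /\
  (forall m, inW2 (c (2 * k + 5 + 2 * m)%N) (c (2 * k + 6 + 2 * m)%N)).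

From HB Require Import structures.
From mathcomp Require Import all_boot all_order all_algebra.
From mathcomp Require Import all_classical all_reals all_analysis.
From mathcomp Require Import ring lra zify.
Set Implicit Arguments. Unset Strict Implicit. Unset Printing Implicit Defensive.
Import Order.TTheory GRing.Theory Num.Theory.
Import numFieldNormedType.Exports.
Local Open Scope classical_set_scope.
Local Open Scope ring_scope.

(* Membership in A_p is a digit-by-digit condition, and the conditions imposed
   by c and by 1^k 0^oo coincide on the first 2k+4 digits; hence every a in A_q
   has a partner b in A_{q_k} with the same first 2k+4 digits, and vice versa.
   For such a pair, |g_q(pi_q a) - g_{q_k}(pi_{q_k} b)| is at most the cost of
   changing the base, sum_j |q^-j - q_k^-j| <= |1/(q-1) - 1/(q_k-1)|, plus the
   tail q_k^-k q_k^-(2k+4) / (q_k - 1).  Since q_k^-k = 2 - q_k <= 1/9, both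
   are small multiples of q_k^-(2k+4). *)

Section GeometricSums.
Context {R : realType}.
Implicit Types x y : R.

Lemma geometric_tail_le x m n : 0 < x < 1 ->
  \sum_(m <= i < n) x ^+ i <= x ^+ m / (1 - x).
Proof.
move=> /andP[x0 x1]; have [mn|nm] := leqP m n; last first.
  rewrite big_geq ?(ltnW nm) //.
  by rewrite divr_ge0 ?exprn_ge0 ?subr_ge0 ?ltW.
rewrite -(subnKC mn) geometric_partial_tail geometric_le_lim ?exprn_ge0 ?ltW //.
by rewrite gtr0_norm.
Qed.

Lemma invf_div1BV x : x != 0 -> x^-1 / (1 - x^-1) = (x - 1)^-1.
Proof.
move=> x0; have [->|x1] := eqVneq x 1; first by rewrite invr1 subrr invr0 mulr0.
by field; rewrite x0 subr_eq0 x1.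
Qed.

Lemma geometric_sum1E x M : x != 1 -> (0 < M)%N ->
  \sum_(1 <= i < M) x ^+ i = (x - x ^+ M) / (1 - x).
Proof.
move=> x1 M0; rewrite -(subnKC M0) geometric_partial_tail geometric_seriesE //=.
by rewrite add1n expr1 exprS mulrBr mulr1.
Qed.

Lemma sum_dist_expr_le x y M : 0 < x < 1 -> 0 < y < 1 ->
  \sum_(1 <= i < M) `|x ^+ i - y ^+ i| <= `|x / (1 - x) - y / (1 - y)|.
Proof.
wlog yx : x y / y <= x => [hw|/andP[x0 x1] /andP[y0 y1]].
  have [yx|/ltW xy hx hy] := leP y x; first exact: hw.
  by under eq_bigr do rewrite distrC; rewrite distrC hw.
have [->|M0] := posnP M; first by rewrite big_geq.
have powM : forall i, y ^+ i <= x ^+ i by move=> i; rewrite lerXn2r // nnegrE ltW.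
under eq_bigr do rewrite ger0_norm ?subr_ge0 //.
rewrite sumrB !geometric_sum1E ?lt_eqF //.
have inv1B : (1 - x)^-1 >= (1 - y)^-1 by rewrite lef_pV2 ?posrE ?subr_gt0 ?lerB.
have : y ^+ M / (1 - y) <= x ^+ M / (1 - x).
  by rewrite ler_pM // ?exprn_ge0 ?invr_ge0 ?subr_ge0 ?ltW.
have : y / (1 - y) <= x / (1 - x) by rewrite ler_pM // ?invr_ge0 ?subr_ge0 ?ltW.
rewrite !mulrBl => h1 h2; rewrite ger0_norm ?subr_ge0 //; lra.
Qed.
End GeometricSums.

Lemma multinacci_exprVn (F : fieldType) (x : F) k :
  x ^+ k = \sum_(i < k) x ^+ i -> x ^- k = 2 - x.
Proof.
move=> xk; have xk_2B : x ^+ k * (2 - x) = 1.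
  have := subrX1 x k; rewrite -xk => h.
  by rewrite -[LHS]addr0 -(subrr (x ^+ k - 1)) {1}h; ring.
have xk0 : x ^+ k != 0 by apply: contra_eq_neq xk_2B => ->; rewrite mul0r eq_sym oner_neq0.
by apply: (mulfI xk0); rewrite mulfV.
Qed.

Section Numerics.
Context {R : realFieldType}.

Lemma bernoulli_ineq (t : R) n : 0 <= t -> 1 + n%:R * t <= (1 + t) ^+ n.
Proof.
move=> t0; elim: n => [|n IH]; first by rewrite mul0r addr0 expr0.
rewrite exprS; apply: le_trans (ler_wpM2l _ IH); last by rewrite addr_ge0.
have := mulr_ge0 (ler0n R n) (mulr_ge0 t0 t0).
rewrite -addn1 natrD; nra.
Qed.

Lemma multinacci_root_ge (x : R) k : (9 <= k)%N -> 1 < x -> x ^- k = 2 - x -> 17/9 <= x.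
Proof.
move=> k9 x1 xk; rewrite leNgt; apply/negP => x_lt.
have xk_2B : x ^+ k * (2 - x) = 1.
  by rewrite -xk mulfV // expf_neq0 // gt_eqF // (lt_trans ltr01).
have bern : 1 + k%:R * (x - 1) <= x ^+ k.
  by rewrite -[X in _ <= X ^+ _](subrKC 1) bernoulli_ineq // subr_ge0 ltW.
have k9R : 9 <= k%:R :> R by rewrite (ler_nat R 9 k).
have : k%:R * (x - 1) < k%:R * (8/9) by rewrite ltr_pM2l; lra.
have : (1 + k%:R * (x - 1)) * (2 - x) <= 1.
  by rewrite -[leRHS]xk_2B ler_wpM2r //; lra.
have -> : (1 + k%:R * (x - 1)) * (2 - x) = 1 + (x - 1) * (k%:R - 1 - k%:R * (x - 1)).
  by ring.
nra.
Qed.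

Lemma near_root_bounds (p q : R) N : 17/9 <= p -> `|q - p| < p ^- (N + 2) ->
  8/5 <= q /\ `|q - p| < p ^- N * (81/289).
Proof.
move=> p_ge dqp; have p0 : 0 < p by lra.
have X1 : p ^- N <= 1.
  by rewrite -exprVn; apply: exprn_ile1; rewrite ?invr_ge0 ?invf_le1 //; lra.
have p2 : p ^- 2 <= 81/289.
  by rewrite -[81/289]invf_div lef_pV2 ?posrE ?exprn_gt0 // expr2; nra.
have dqpX : `|q - p| < p ^- N * (81/289).
  apply: lt_le_trans dqp _; rewrite exprD invfM ler_wpM2l // ltW //.
  by rewrite invr_gt0 exprn_gt0.
by split=> //; move: dqpX; rewrite ltr_norml => /andP[]; lra.
Qed.

Lemma expansion_error_lt (p q : R) k N : 17/9 <= p -> p ^- k = 2 - p ->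
  8/5 <= q -> `|q - p| < p ^- N * (81/289) ->
  `|(q - 1)^-1 - (p - 1)^-1| + p ^- k * (p ^- N / (p - 1)) < p ^- N.
Proof.
move=> p_ge pk q_ge dqp; have X0 : 0 < p ^- N by rewrite invr_gt0 exprn_gt0 //; lra.
have hD : `|(q - 1)^-1 - (p - 1)^-1| <= `|q - p| * (15/8).
  have -> : (q - 1)^-1 - (p - 1)^-1 = (p - q) / ((q - 1) * (p - 1)).
    by field; apply/andP; split; apply/eqP; lra.
  have prod : 3/5 * (8/9) <= (q - 1) * (p - 1) by apply: ler_pM; lra.
  have prod_gt0 : 0 < (q - 1) * (p - 1) by lra.
  rewrite normrM normfV (gtr0_norm prod_gt0) distrC ler_pdivrMr // -mulrA.
  by rewrite ler_peMr //; lra.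
have hT : p ^- k * (p ^- N / (p - 1)) <= 1/9 * (p ^- N * (9/8)).
  have p1 : 0 < p - 1 by lra.
  apply: ler_pM.
  - by rewrite invr_ge0 exprn_ge0 //; lra.
  - by rewrite divr_ge0 // ltW.
  - by rewrite pk; lra.
  - apply: ler_wpM2l; first exact: ltW.
    by rewrite -[9/8]invf_div lef_pV2 ?posrE //; lra.
lra.
Qed.
End Numerics.

Section PartialSums.
Context {R : realType}.
Implicit Types (p q : R) (a b d : nat -> bool).

Definition psumB p a n : R := \sum_(1 <= j < n) ((a j : nat)%:R * p ^- j).

Lemma psumBE p a n : psumB p a n = \sum_(1 <= j < n) (a j : nat)%:R * p^-1 ^+ j.
Proof. by apply: eq_bigr => j _; rewrite exprVn. Qed.

Lemma invr_gt1_bounds p : 1 < p -> 0 < p^-1 < 1.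
Proof. by move=> p1; rewrite invr_gt0 invf_lt1 ?(lt_trans ltr01) //. Qed.

Lemma psumB_le p a n : 1 < p -> psumB p a n <= (p - 1)^-1.
Proof.
move=> p1; have x01 := invr_gt1_bounds p1.
rewrite psumBE -invf_div1BV ?gt_eqF ?(lt_trans ltr01) //.
have := geometric_tail_le 1 n x01; rewrite expr1; apply: le_trans.
case/andP: x01 => x0 _; apply: ler_sum => j _.
by apply: ler_piMl; [exact/exprn_ge0/ltW | case: (a j)].
Qed.

Lemma psumB_cvg p a : 1 < p -> cvgn (psumB p a).
Proof.
move=> p1; have p0 : 0 < p by exact: lt_trans p1.
apply: nondecreasing_is_cvgn; last first.
  by exists (p - 1)^-1 => _ [n _ <-]; exact: psumB_le.
apply/nondecreasing_seqP => n; rewrite /psumB.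
have [->|n0] := posnP n; first by rewrite !big_geq.
by rewrite big_nat_recr //= lerDl divr_ge0 // exprn_ge0 // ltW.
Qed.

Lemma g_psumB_cvg p k a : 1 < p ->
  g p k (psumB p a n) @[n --> \oo] --> g p k (piB p a).
Proof.
by move=> p1; apply: cvgD; [apply: cvgM; [exact: cvg_cst|exact: psumB_cvg]|exact: cvg_cst].
Qed.

Definition g_digits k a i : bool := (0 < i < k)%N || (k < i)%N && a (i - k)%N.

Lemma g_psumB p k a n : (0 < k)%N ->
  g p k (psumB p a n) = psumB p (g_digits k a) (n + k).
Proof.
move=> k0; rewrite /g /psumB addrC [RHS](big_cat_nat k0) ?leq_addl //=.
congr (_ + _).
  by apply: eq_big_nat => i /andP[i0 ik]; rewrite /g_digits i0 ik mul1r.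
rewrite [RHS](big_addn 0 _ k) addnK mulr_sumr.
case: n => [|n]; first by rewrite !big_geq.
rewrite big_ltn //= {1}/g_digits ltnn andbF mul0r add0r.
apply: eq_big_nat => j /andP[j0 _].
rewrite /g_digits addnK.
have -> : (j + k < k)%N = false by lia.
have -> : (k < j + k)%N by lia.
by rewrite andbF exprD invfM; ring.
Qed.

Lemma psumB_dist_base_le q p d n : 1 < q -> 1 < p ->
  `|psumB q d n - psumB p d n| <= `|(q - 1)^-1 - (p - 1)^-1|.
Proof.
move=> q1 p1; rewrite -!invf_div1BV ?gt_eqF ?(lt_trans ltr01) //.
apply: le_trans (sum_dist_expr_le n (invr_gt1_bounds q1) (invr_gt1_bounds p1)).
rewrite !psumBE -sumrB; apply: le_trans (ler_norm_sum _ _ _) _.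
apply: ler_sum => j _; rewrite -mulrBr normrM.
by apply: ler_piMl => //; case: (d j); rewrite ?normr1 ?normr0.
Qed.

Lemma psumB_dist_prefix_le p a b N n : 1 < p -> (forall j, (j <= N)%N -> a j = b j) ->
  `|psumB p a n - psumB p b n| <= p ^- N / (p - 1).
Proof.
move=> p1 ab; have x01 := invr_gt1_bounds p1; have /andP[x0 x1] := x01.
have bound_ge0 : 0 <= p ^- N / (p - 1).
  by rewrite divr_ge0 ?invr_ge0 ?exprn_ge0 ?subr_ge0 ?ltW // (lt_trans ltr01).
rewrite /psumB -sumrB.
have head0 m : (m <= N.+1)%N ->
    \sum_(1 <= j < m) ((a j : nat)%:R * p ^- j - (b j : nat)%:R * p ^- j) = 0.
  move=> mN; rewrite big_nat big1 // => j /andP[_ jm].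
  by rewrite ab ?subrr // -ltnS (leq_trans jm).
have [nN|Nn] := leqP n N.+1; first by rewrite head0 // normr0.
rewrite (big_cat_nat (n := N.+1)) //= ?(ltnW Nn) // head0 // add0r.
apply: le_trans (ler_norm_sum _ _ _) _.
apply: (@le_trans _ _ (\sum_(N.+1 <= j < n) p^-1 ^+ j)).
  apply: ler_sum => j _.
  rewrite -mulrBl normrM -exprVn (ger0_norm (exprn_ge0 _ (ltW x0))).
  apply: ler_piMl; first exact/exprn_ge0/ltW.
  by case: (a j); case: (b j); rewrite ?subrr ?normr0 ?subr0 ?sub0r ?normrN ?normr1.
apply: le_trans (geometric_tail_le _ _ x01) _.
by rewrite exprSr -mulrA invf_div1BV ?exprVn // gt_eqF // (lt_trans ltr01).
Qed.

Lemma g_distE p k x y : 0 < p -> `|g p k x - g p k y| = p ^- k * `|x - y|.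
Proof.
move=> p0; rewrite /g opprD addrACA subrr addr0 -mulrBr normrM.
by rewrite ger0_norm // invr_ge0 exprn_ge0 // ltW.
Qed.

Lemma g_piB_dist_le q p k N a b : (0 < k)%N -> 1 < q -> 1 < p ->
  (forall j, (j <= N)%N -> a j = b j) ->
  `|g q k (piB q a) - g p k (piB p b)| <=
    `|(q - 1)^-1 - (p - 1)^-1| + p ^- k * (p ^- N / (p - 1)).
Proof.
move=> k0 q1 p1 ab.
apply: cvgr_to_le (cvg_norm (cvgB (g_psumB_cvg q1) (g_psumB_cvg p1))) _.
apply: nearW => n /=; apply: le_trans (ler_distD (g p k (psumB p a n)) _ _) _.
apply: lerD; first by rewrite !g_psumB //; exact: psumB_dist_base_le.
have p0 : 0 < p := lt_trans ltr01 p1.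
rewrite g_distE //; apply: ler_wpM2l; first by rewrite invr_ge0 exprn_ge0 // ltW.
exact: psumB_dist_prefix_le.
Qed.
End PartialSums.

Section DigitSets.
Implicit Types (c d : nat -> int) (a : nat -> bool).

Definition Aset_default_digit c j : bool :=
  (c j == 1) || (c j == 0) && (zcount c j %% 4 == 1)%N.

Lemma zcount_eq c d j : (forall i, (1 <= i < j)%N -> c i = d i) ->
  zcount c j = zcount d j.
Proof. by move=> cd; apply: eq_big_nat => i /cd ->. Qed.

Lemma Aset_patch c d N a : (forall j, (1 <= j <= N)%N -> c j = d j) ->
  Aset c a -> exists2 b, Aset d b & forall j, (j <= N)%N -> a j = b j.
Proof.
move=> cd Aa; exists (fun j => if (j <= N)%N then a j else Aset_default_digit d j); last first.
  by move=> j ->.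
move=> j j1; case: ifP => jN.
  have zc : zcount c j = zcount d j.
    by apply: zcount_eq => i /andP[i1 ij]; rewrite cd // i1 (leq_trans (ltnW ij)).
  by rewrite -cd ?j1 // -zc; exact: Aa.
by rewrite /Aset_default_digit; split=> [->|->|->->|->->].
Qed.

Lemma in_1k0W2_prefix k c : in_1k0W2 k c ->
  forall j, (1 <= j <= 2 * k + 4)%N -> c j = ck k j.
Proof.
case=> [ones [zeros _]] j /andP[j1 jN]; rewrite /ck j1 /=.
by have [jk|kj] := leqP j k; [rewrite ones ?j1 | rewrite zeros ?kj].
Qed.
End DigitSets.

Section HausdorffDistance.
Context {R : realType}.
Implicit Types (A B : set R).

Lemma sup_distset_le A B e : 0 <= e ->
  (forall a, A a -> exists2 b, B b & `|a - b| <= e) ->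
  sup [set distset a B | a in A] <= e.
Proof.
move=> e0 AB; have [[a0 Aa0]|/nonemptyPn A0] := pselect (A !=set0); last first.
  by rewrite A0 image_set0 sup0.
apply: ge_sup; first by exists (distset a0 B), a0.
move=> _ [a Aa <-]; have [b Bb ab] := AB a Aa.
apply: le_trans ab; apply: ge_inf; last by exists b.
by exists 0 => _ [y _ <-].
Qed.

Lemma dH_le A B e : 0 <= e ->
  (forall a, A a -> exists2 b, B b & `|a - b| <= e) ->
  (forall b, B b -> exists2 a, A a & `|a - b| <= e) ->
  dH A B <= e.
Proof.
move=> e0 AB BA; rewrite /dH ge_max !sup_distset_le // => b Bb.
by have [a Aa ab] := BA b Bb; exists a; rewrite // distrC.
Qed.
End HausdorffDistance.

Theorem lemma4p8 (R : realType) (k : nat) (qk q : R) :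
  (9 <= k)%N ->
  1 < qk < 2 -> qk ^+ k = \sum_(i < k) qk ^+ i ->
  `|q - qk| < qk ^- (2 * k + 6) ->
  forall c : nat -> int,
    in_1k0W2 k c -> piZ q c = 1 ->
    dH (g q k @` (piB q @` Aset c)) (g qk k @` (piB qk @` Aset (ck k)))
      < qk ^- (2 * k + 4).
Proof.
move=> k9 /andP[qk1 _] qk_root hq c hc _.
have qk_k : qk ^- k = 2 - qk by exact: multinacci_exprVn.
have qk_ge := multinacci_root_ge k9 qk1 qk_k.
have [q_ge dq] : 8/5 <= q /\ `|q - qk| < qk ^- (2 * k + 4) * (81/289).
  by apply: near_root_bounds; rewrite // -addnA.
have q1 : 1 < q by lra.
have close a b : (forall j, (j <= 2 * k + 4)%N -> a j = b j) ->
    `|g q k (piB q a) - g qk k (piB qk b)| <=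
      `|(q - 1)^-1 - (qk - 1)^-1| + qk ^- k * (qk ^- (2 * k + 4) / (qk - 1)).
  by apply: g_piB_dist_le; rewrite // (leq_trans _ k9).
apply: le_lt_trans (expansion_error_lt qk_ge qk_k q_ge dq).
have prefix := in_1k0W2_prefix hc.
apply: dH_le.
- exact: le_trans (normr_ge0 _) (close xpredT xpredT (fun _ _ => erefl)).
- move=> _ [_ [a Aa <-] <-]; have [b Bb ab] := Aset_patch prefix Aa.
  by exists (g qk k (piB qk b)); [exists (piB qk b) => //; exists b | exact: close].
- move=> _ [_ [b Bb <-] <-].
  have [a Aa ab] := Aset_patch (fun j hj => esym (prefix j hj)) Bb.
  by exists (g q k (piB q a)); [exists (piB q a) => //; exists a | apply: close => j /ab].
Qed.
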